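(* Let $\omega\in(0,\pi/2]$ and let $S$ be a moving sofa with rotation angle $\omega$ in standard position. Then its monotonization $\mathcal{M}(S)=P_\omega\cap\bigcap_{0\le t\le\omega}L_S(t)$ is connected.
   Context: For $t\in\mathbb{R}$ put $u_t=(\cos t,\sin t)$, $v_t=(-\sin t,\cos t)$; $R_t$ is counterclockwise rotation about the origin by $t$. For a nonempty compact $S$, $p_S(t)=\max_{p\in S}p\cdot u_t$. The hallway is $L=((-\infty,1]\times[0,1])\cup([0,1]\times(-\infty,1])$, $L_H=(-\infty,1]\times[0,1]$, $L_V=[0,1]\times(-\infty,1]$. A moving sofa is a connected, nonempty, compact $S\subset\mathbb{R}^2$ such that some translate of $S$ lies in $L_H$ and can be moved by a continuous rigid motion inside $L$ to a subset of $L_V$; its rotation angle $\omega\in(0,\pi/2]$ is the total clockwise angle rotated in this motion (regarded as fixed data of the sofa). It is in standard position if $p_S(\omega)=p_S(\pi/2)=1$. Let $H=\mathbb{R}\times[0,1]$, $V=[0,1]\times\mathbb{R}$, $P_\omega=H\cap R_\omega(V)$, and $L_S(t)=R_t(L)+(p_S(t)-1)u_t+(p_S(t+\pi/2)-1)v_t$. *)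

From HB Require Import structures.
From mathcomp Require Import all_boot all_order all_algebra.
From mathcomp Require Import all_classical all_reals all_analysis.
Set Implicit Arguments. Unset Strict Implicit. Unset Printing Implicit Defensive.
Import Order.TTheory GRing.Theory Num.Theory.
Import numFieldNormedType.Exports.
Local Open Scope classical_set_scope.
Local Open Scope ring_scope.

Section Sofa.
Variable R : realType.
Definition pt := (R * R)%type.

Definition dotp (p q : pt) : R := p.1 * q.1 + p.2 * q.2.
Definition addp (p q : pt) : pt := (p.1 + q.1, p.2 + q.2).
Definition scalep (a : R) (p : pt) : pt := (a * p.1, a * p.2).
Definition u_ (t : R) : pt := (cos t, sin t).
Definition v_ (t : R) : pt := (- sin t, cos t).
Definition rot (t : R) (p : pt) : pt :=
  (cos t * p.1 - sin t * p.2, sin t * p.1 + cos t * p.2).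

Definition motion (t : R) (x : pt) (S : set pt) : set pt :=
  [set addp (rot t p) x | p in S].

(* support function p_S(t) = max_{p in S} p . u_t (a sup, which is attained
   for nonempty compact S) *)
Definition supp (S : set pt) (t : R) : R := sup [set dotp p (u_ t) | p in S].

Definition L_H : set pt := [set p | p.1 <= 1 /\ 0 <= p.2 <= 1].
Definition L_V : set pt := [set p | 0 <= p.1 <= 1 /\ p.2 <= 1].
Definition hallway : set pt := L_H `|` L_V.

(* S is a moving sofa with rotation angle omega: connected, nonempty, compact,
   and there is a continuous rigid motion s |-> (theta s, x s), s in [0,1],
   starting from a translate of S inside L_H (theta 0 = 0), staying inside L,
   ending inside L_V, with total clockwise rotation omega (theta 1 = - omega). *)
Definition moving_sofa (S : set pt) (omega : R) : Prop :=
  [/\ connected S, S !=set0, compact S &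
   (exists (theta : R -> R) (x : R -> pt),
     [/\ {within `[0, 1], continuous theta},
         {within `[0, 1], continuous x},
         theta 0 = 0 /\ theta 1 = - omega,
         (motion (theta 0) (x 0) S `<=` L_H) /\ (motion (theta 1) (x 1) S `<=` L_V) &
         (forall s, 0 <= s <= 1 -> motion (theta s) (x s) S `<=` hallway)])].

Definition standard_position (S : set pt) (omega : R) : Prop :=
  supp S omega = 1 /\ supp S (pi / 2) = 1.

Definition Hstrip : set pt := [set p | 0 <= p.2 <= 1].
Definition Vstrip : set pt := [set p | 0 <= p.1 <= 1].
Definition P_ (omega : R) : set pt := Hstrip `&` (rot omega @` Vstrip).

Definition L_S (S : set pt) (t : R) : set pt :=
  [set addp (rot t q)
        (addp (scalep (supp S t - 1) (u_ t))
              (scalep (supp S (t + pi / 2) - 1) (v_ t))) | q in hallway].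

Definition monotonization (S : set pt) (omega : R) : set pt :=
  P_ omega `&` \bigcap_(t in `[0, omega]) L_S S t.
End Sofa.

From Pilot Require Import Defs.
From HB Require Import structures.
From mathcomp Require Import all_boot all_order all_algebra.
From mathcomp Require Import all_classical all_reals all_analysis.
From mathcomp Require Import ring lra.
Import Order.TTheory GRing.Theory Num.Theory.
Import numFieldNormedType.Exports.
Local Open Scope classical_set_scope.
Local Open Scope ring_scope.

(* Write [hcoord S t z] for the coordinate of [z] along [u_ t], normalised so
   that the outer wall of [L_S S t] sits at 1: then [L_S S t] is the L-shape
   {x <= 1, y <= 1, 0 <= x or 0 <= y} in the coordinates
   (hcoord t, hcoord (t + pi/2)).  In standard position the monotonization M
   is therefore cut out by "roof" constraints (all these coordinates are
   <= 1), which are convex and survive moving down, and "floor" constraints,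
   which survive moving up.

   As S is connected and S <= M, it suffices to join every p in M to S inside
   M.  Push p up as far as the roof allows: by compactness of [0, omega] the
   top point e touches an outer wall, with normal u_a for a = t0 or
   t0 + pi/2.  The segment from e to a point of S on the same wall stays in M.
   Convexity handles everything except the corner condition of each L_S(t);
   that one holds either because connectedness of S puts a point of S in the
   closed corner of L_S(t), which lies on the inner side of the wall line, or
   because the wall is oblique in the frame of L_S(t), so that the segment is
   monotone in that frame and cannot dip into the open corner. *)

Section RealFacts.
Context {R : realFieldType}.
Implicit Types (a b c l x y : R).

Lemma conv_le {x1 x2 c l} : 0 <= l <= 1 -> x1 <= c -> x2 <= c -> x1 + l * (x2 - x1) <= c.
Proof. by move=> /andP[l0 l1] h1 h2; nra. Qed.

Lemma conv_ge {x1 x2 c l} : 0 <= l <= 1 -> c <= x1 -> c <= x2 -> c <= x1 + l * (x2 - x1).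
Proof. by move=> /andP[l0 l1] h1 h2; nra. Qed.

Lemma quadrant_segment {x1 y1 x2 y2 l} : 0 <= l <= 1 ->
  0 <= x1 \/ 0 <= y1 -> 0 <= x2 \/ 0 <= y2 -> 0 <= (x2 - x1) * (y2 - y1) ->
  0 <= x1 + l * (x2 - x1) \/ 0 <= y1 + l * (y2 - y1).
Proof.
move=> l01 h1 h2 hxy; have /andP[l0 l1] := l01.
case: (lerP 0 (x1 + l * (x2 - x1))) => hx; first by left.
case: (lerP 0 (y1 + l * (y2 - y1))) => hy; first by right.
exfalso; case: h1 => h1; case: h2 => h2.
- by have := conv_ge l01 h1 h2; lra.
- have dx : x2 - x1 < 0 by nra.
  have dy : 0 < y2 - y1 by nra.
  by have := pmulr_llt0 (x2 - x1) dy; lra.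
- have dx : 0 < x2 - x1 by nra.
  have dy : y2 - y1 < 0 by nra.
  by have := pmulr_rlt0 (y2 - y1) dx; lra.
- by have := conv_ge l01 h1 h2; lra.
Qed.

Lemma nonneg_comb {a b x y} : 0 <= a -> 0 <= b -> a ^+ 2 + b ^+ 2 = 1 ->
  0 <= a * x + b * y -> 0 <= x \/ 0 <= y.
Proof.
move=> a0 b0 ab1 h; case: (lerP 0 x) => hx; first by left.
right; rewrite leNgt; apply/negP => hy.
have ax : a * x <= 0 by rewrite mulr_ge0_le0 // ltW.
have bY : b * y <= 0 by rewrite mulr_ge0_le0 // ltW.
have [a_gt0 | a_le0] := ltrP 0 a; first by have := pmulr_rlt0 x a_gt0; lra.
have b_gt0 : 0 < b by rewrite lt_neqAle b0 andbT; apply/eqP => b_eq0; nra.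
by have := pmulr_rlt0 y b_gt0; lra.
Qed.

Lemma comb0_mul_ge0 {a b x y} : a * x + b * y = 0 -> a * b <= 0 -> a ^+ 2 + b ^+ 2 = 1 ->
  0 <= x * y.
Proof.
move=> h ab ab1.
have e : x * y * (a ^+ 2 + b ^+ 2) + a * b * (x ^+ 2 + y ^+ 2) =
         (a * x + b * y) * (a * y + b * x) by ring.
rewrite h mul0r ab1 mulr1 in e.
by have := mulr_le0_ge0 ab (addr_ge0 (sqr_ge0 x) (sqr_ge0 y)); lra.
Qed.

End RealFacts.

Lemma affine_sup_le {R : realType} {D : set R} {c0 c1 h : R} :
  D !=set0 -> has_ubound D -> 0 <= c1 ->
  (forall d, D d -> c0 + c1 * d <= h) -> c0 + c1 * sup D <= h.
Proof.
move=> [d0 Dd0] Dub c1_ge0 Dh.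
have [c1_gt0 | c1_le0] := ltrP 0 c1; last first.
  have c1_eq0 : c1 = 0 by apply/eqP; rewrite eq_le c1_le0.
  by have := Dh d0 Dd0; rewrite c1_eq0 !mul0r.
have : sup D <= (h - c0) / c1.
  by apply: ge_sup => [|d Dd]; [exists d0 | rewrite ler_pdivlMr //; have := Dh d Dd; lra].
by rewrite ler_pdivlMr // => ?; lra.
Qed.

Lemma continuous_pos_lbound {R : realType} {f : R -> R} {a b : R} : a <= b ->
  {within `[a, b], continuous f} -> (forall t, a <= t <= b -> 0 < f t) ->
  exists2 e, 0 < e & forall t, a <= t <= b -> e <= f t.
Proof.
move=> ab fcont fpos; have [c /[!in_itv] /= /fpos fc cmin] := EVT_min ab fcont.
by exists (f c) => // t tab; apply: cmin; rewrite in_itv.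
Qed.

Lemma connected_linked {T : topologicalType} {X C : set T} :
  connected C -> C !=set0 -> C `<=` X ->
  (forall x, X x -> exists K, [/\ connected K, K `<=` X, K x & K `&` C !=set0]) ->
  connected X.
Proof.
move=> Ccon [c Cc] CX Xlinked.
have CcompX : C `<=` connected_component X c by apply: connected_component_max.
suff -> : X = connected_component X c by exact: component_connected.
apply/seteqP; split; last exact: connected_component_sub.
move=> x /Xlinked[K [Kcon KX Kx [k [Kk Ck]]]].
have KCcon : connected (K `|` C) by apply: connectedU => //; exists k.
have KCX : K `|` C `<=` X by move=> y [/KX | /CX].
by apply: (connected_component_max (x := c) _ KCX KCcon); [right | left].
Qed.

Section PlaneGeometry.
Context {R : realType}.
Implicit Types (t a l : R) (p q z w : pt R).

Lemma u_Dpihalf t : u_ (t + pi / 2) = v_ t.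
Proof. by rewrite /u_ /v_ cosDpihalf sinDpihalf. Qed.

Lemma dotp_u_pihalf z : dotp z (u_ (pi / 2)) = z.2.
Proof. by rewrite /dotp /u_ cos_pihalf sin_pihalf mulr0 mulr1 add0r. Qed.

Lemma dotp_rot_u t q : dotp (Defs.rot t q) (u_ t) = q.1.
Proof.
rewrite /dotp /Defs.rot /u_ /=.
by transitivity (q.1 * (cos t ^+ 2 + sin t ^+ 2)); [ring | rewrite cos2Dsin2 mulr1].
Qed.

Lemma dotp_rot_v t q : dotp (Defs.rot t q) (v_ t) = q.2.
Proof.
rewrite /dotp /Defs.rot /v_ /=.
by transitivity (q.2 * (cos t ^+ 2 + sin t ^+ 2)); [ring | rewrite cos2Dsin2 mulr1].
Qed.

Lemma rot_dotp t z : Defs.rot t (dotp z (u_ t), dotp z (v_ t)) = z.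
Proof.
rewrite /Defs.rot /dotp /u_ /v_ /=; case: z => a b /=; congr (_, _).
  by transitivity (a * (cos t ^+ 2 + sin t ^+ 2)); [ring | rewrite cos2Dsin2 mulr1].
by transitivity (b * (cos t ^+ 2 + sin t ^+ 2)); [ring | rewrite cos2Dsin2 mulr1].
Qed.

Lemma rot_shift t q a b :
  addp (Defs.rot t q) (addp (scalep a (u_ t)) (scalep b (v_ t))) =
  Defs.rot t (q.1 + a, q.2 + b).
Proof. by rewrite /addp /scalep /Defs.rot /u_ /v_ /=; congr (_, _); ring. Qed.

Lemma rot0 z : Defs.rot 0 z = z.
Proof. by rewrite /Defs.rot cos0 sin0 !mul1r !mul0r subr0 add0r; case: z. Qed.

Lemma rotN t z : Defs.rot (- t) z = (dotp z (u_ t), dotp z (u_ (t + pi / 2))).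
Proof. by rewrite u_Dpihalf /Defs.rot /dotp /u_ /v_ /= cosN sinN; congr (_, _); ring. Qed.

Lemma dotp_u_frame a t z :
  dotp z (u_ a) = cos (a - t) * dotp z (u_ t) + sin (a - t) * dotp z (u_ (t + pi / 2)).
Proof.
rewrite u_Dpihalf /dotp /u_ /v_ cosB sinB /=.
transitivity (z.1 * cos a * (cos t ^+ 2 + sin t ^+ 2) +
              z.2 * sin a * (cos t ^+ 2 + sin t ^+ 2)); last ring.
by rewrite cos2Dsin2 !mulr1.
Qed.

Lemma continuous_dotp w : continuous (fun p : pt R => dotp p w).
Proof.
move=> p; apply: cvgD; apply: cvgM; [exact: cvg_fst | exact: cvg_cst |
  exact: cvg_snd | exact: cvg_cst].
Qed.

Lemma continuous_dotp_u z : continuous (fun t => dotp z (u_ t)).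
Proof.
move=> t; apply: cvgD; apply: cvgM; [exact: cvg_cst | exact: continuous_cos |
  exact: cvg_cst | exact: continuous_sin].
Qed.

Definition seg p q l : pt R := (p.1 + l * (q.1 - p.1), p.2 + l * (q.2 - p.2)).

Definition lineseg p q : set (pt R) := seg p q @` `[0, 1].

Lemma dotp_seg p q w l : dotp (seg p q l) w = dotp p w + l * (dotp q w - dotp p w).
Proof. rewrite /seg /dotp /=; ring. Qed.

Lemma continuous_seg p q : continuous (seg p q).
Proof.
move=> l; rewrite /seg.
by apply: (@cvg_pair _ _ _ (nbhs l) (nbhs _) (nbhs _)); apply: cvgD; (try exact: cvg_cst);
  apply: cvgM; [exact: cvg_id | exact: cvg_cst | exact: cvg_id | exact: cvg_cst].
Qed.

Lemma lineseg_connected p q : connected (lineseg p q).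
Proof.
apply: connected_continuous_connected; first exact: segment_connected.
exact/continuous_subspaceT/continuous_seg.
Qed.

Lemma lineseg_start p q : lineseg p q p.
Proof.
by exists 0; [rewrite /= in_itv /= lexx ler01 | rewrite /seg !mul0r !addr0; case: p].
Qed.

Lemma lineseg_end p q : lineseg p q q.
Proof.
by exists 1; [rewrite /= in_itv /= lexx ler01 | rewrite /seg !mul1r !subrKC; case: q].
Qed.

Lemma hallwayP p : hallway p <-> [/\ p.1 <= 1, p.2 <= 1 & 0 <= p.1 \/ 0 <= p.2].
Proof.
split; first by case=> [[? /andP[? ?]] | [/andP[? ?] ?]]; split=> //; [right | left].
by case=> h1 h2 [h | h]; [right | left]; split=> //; apply/andP.
Qed.

Lemma hallway_mono {p q} :
  hallway p -> p.1 <= q.1 <= 1 -> p.2 <= q.2 <= 1 -> hallway q.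
Proof.
case/hallwayP => _ _ hp /andP[h1 h1'] /andP[h2 h2']; apply/hallwayP.
by split=> //; case: hp => ?; [left | right]; exact: le_trans h1 || exact: le_trans h2.
Qed.

End PlaneGeometry.

Section HallwayCoordinates.
Context {R : realType}.
Variable S : set (pt R).
Implicit Types (t d l : R) (p q z : pt R).

Definition hcoord t z : R := dotp z (u_ t) - supp S t + 1.

Definition vshift z d : pt R := (z.1, z.2 + d).

Lemma L_SP t z : L_S S t z <-> hallway (hcoord t z, hcoord (t + pi / 2) z).
Proof.
rewrite /L_S /hcoord u_Dpihalf; split.
  have e a b : a + (b - 1) - b + 1 = a :> R by ring.
  by case=> q hq <-; rewrite rot_shift dotp_rot_u dotp_rot_v /= !e; case: q hq.
have e a b : a - b + 1 + (b - 1) = a :> R by ring.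
by move=> hz; eexists; first exact: hz; rewrite rot_shift /= !e rot_dotp.
Qed.

Lemma parallelogramP omega z : P_ omega z <-> 0 <= z.2 <= 1 /\ 0 <= dotp z (u_ omega) <= 1.
Proof.
rewrite /P_; split; first by case=> h [p hp pz]; split => //; rewrite -pz dotp_rot_u.
by case=> h1 h2; split => //; exists (dotp z (u_ omega), dotp z (v_ omega)); rewrite ?rot_dotp.
Qed.

Lemma hcoord_seg t p q l :
  hcoord t (seg p q l) = hcoord t p + l * (hcoord t q - hcoord t p).
Proof. rewrite /hcoord dotp_seg; ring. Qed.

Lemma hcoord_vshift t z d : hcoord t (vshift z d) = hcoord t z + d * sin t.
Proof. rewrite /hcoord /dotp /u_ /=; ring. Qed.

Lemma vshiftD z d d' : vshift (vshift z d) d' = vshift z (d + d').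
Proof. by rewrite /vshift addrA. Qed.

Lemma seg_vshift z d l : seg z (vshift z d) l = vshift z (l * d).
Proof. by rewrite /seg /vshift /= subrr mulr0 addr0 addrAC subrr add0r. Qed.

End HallwayCoordinates.

Section SupportFunction.
Context {R : realType}.
Variable S : set (pt R).
Hypothesis cS : compact S.
Hypothesis S0 : S !=set0.
Implicit Types (t a : R) (p z : pt R).

Lemma dotp_max t : exists2 c, S c & forall p, S p -> dotp p (u_ t) <= dotp c (u_ t).
Proof.
have [c /[!inE] Sc cmax] := compact_EVT_max S0 cS
  (continuous_subspaceT (continuous_dotp (u_ t))).
by exists c => // p Sp; apply: cmax; rewrite inE.
Qed.

Lemma supp_le t a : (forall p, S p -> dotp p (u_ t) <= a) -> supp S t <= a.
Proof.
move=> ub; apply: ge_sup => [|_ [p Sp <-]]; last exact: ub.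
by have [p Sp] := S0; exists (dotp p (u_ t)), p.
Qed.

Lemma supp_ub t p : S p -> dotp p (u_ t) <= supp S t.
Proof.
have [c _ cmax] := dotp_max t.
by move=> Sp; apply: ub_le_sup; [exists (dotp c (u_ t)) => _ [q /cmax ? <-] | exists p].
Qed.

Lemma supp_attained t : exists2 c, S c & dotp c (u_ t) = supp S t.
Proof.
have [c Sc cmax] := dotp_max t.
by exists c => //; apply/eqP; rewrite eq_le supp_ub //=; apply: supp_le.
Qed.

Lemma supp_le_shift B t t' : (forall p, S p -> `|p| <= B) ->
  supp S t' <= supp S t + B * (`|cos t' - cos t| + `|sin t' - sin t|).
Proof.
move=> SB; apply: supp_le => p Sp.
have [p1B p2B] : `|p.1| <= B /\ `|p.2| <= B.
  by have := SB p Sp; rewrite prod_normE ge_max => /andP.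
have -> : dotp p (u_ t') = dotp p (u_ t) + (p.1 * (cos t' - cos t) + p.2 * (sin t' - sin t)).
  by rewrite /dotp /u_ /=; ring.
rewrite lerD ?supp_ub //.
apply: le_trans (ler_norm _) _; apply: le_trans (ler_normD _ _) _.
by rewrite !normrM mulrDr; apply: lerD; apply: ler_wpM2r.
Qed.

Lemma supp_continuous : continuous (supp S).
Proof.
have [B0 [_ SB]] := compact_bounded cS.
pose B : R := `|B0| + 1.
have {}SB p : S p -> `|p| <= B.
  by apply: SB; rewrite /B; have := ler_norm B0; lra.
move=> t; pose g t' := B * (`|cos t' - cos t| + `|sin t' - sin t|).
have g0 : g t' @[t' --> t] --> 0.
  have -> : 0 = g t by rewrite /g !subrr normr0 addr0 mulr0.
  apply: cvgM; first exact: cvg_cst.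
  apply: cvgD; apply: cvg_norm; apply: cvgB;
    (exact: cvg_cst || exact: continuous_cos || exact: continuous_sin).
apply: (@squeeze_cvgr _ _ _ _ (fun t' => supp S t - g t') (fun t' => supp S t + g t')).
- near=> t'; have := supp_le_shift _ t t' SB; have := supp_le_shift _ t' t SB.
  by rewrite /g distrC [`|sin t - _|]distrC => *; apply/andP; split; lra.
- by rewrite -[X in _ --> X]subr0; apply: cvgB => //; exact: cvg_cst.
- by rewrite -[X in _ --> X]addr0; apply: cvgD => //; exact: cvg_cst.
Unshelve. all: by end_near.
Qed.

Lemma continuous_hcoord z : continuous (hcoord S ^~ z).
Proof.
move=> t; apply: cvgD; last exact: cvg_cst.
by apply: cvgB; [exact: continuous_dotp_u | exact: supp_continuous].
Qed.

Lemma continuous_hcoord_shift z a : continuous (fun t => hcoord S (t + a) z).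
Proof.
move=> t; apply: (continuous_comp (f := +%R^~ a) (g := hcoord S ^~ z)).
  by apply: cvgD; [exact: cvg_id | exact: cvg_cst].
exact: continuous_hcoord.
Qed.

Lemma hcoord_le1 t p : S p -> hcoord S t p <= 1.
Proof. by move/(supp_ub t); rewrite /hcoord; lra. Qed.

Lemma hcoord_attained t : exists2 c, S c & hcoord S t c = 1.
Proof. by have [c Sc ec] := supp_attained t; exists c; rewrite // /hcoord ec subrr add0r. Qed.

Lemma sub_L_S_of_hallway_translate t c :
  (forall s, S s -> hallway (dotp s (u_ t) + c.1, dotp s (u_ (t + pi / 2)) + c.2)) ->
  S `<=` L_S S t.
Proof.
move=> Sc; have bound s :
    S s -> dotp s (u_ t) + c.1 <= 1 /\ dotp s (u_ (t + pi / 2)) + c.2 <= 1.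
  by case/Sc/hallwayP.
have supp1 : supp S t <= 1 - c.1 by apply: supp_le => s /bound[]; lra.
have supp2 : supp S (t + pi / 2) <= 1 - c.2 by apply: supp_le => s /bound[]; lra.
move=> s Ss; apply/L_SP; apply: (hallway_mono (Sc s Ss)) => /=; apply/andP;
  split; rewrite ?hcoord_le1 // /hcoord; lra.
Qed.

Lemma slab_of_translated_slab t c :
  (forall s, S s -> 0 <= dotp s (u_ t) + c <= 1) -> supp S t = 1 ->
  forall s, S s -> 0 <= dotp s (u_ t) <= 1.
Proof.
move=> Sc supp1 s Ss; have [m Sm em] := supp_attained t.
have := Sc m Sm; have := Sc s Ss; have := supp_ub t s Ss; rewrite em supp1.
by move=> ? /andP[? _] /andP[_ ?]; apply/andP; split; lra.
Qed.

Lemma corner_point_of_connected t : connected S -> S `<=` L_S S t ->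
  exists2 s, S s & 0 <= hcoord S t s /\ 0 <= hcoord S (t + pi / 2) s.
Proof.
move=> Scon SL; pose f s := hcoord S t s - hcoord S (t + pi / 2) s.
have /connected_intervalP fS : connected (f @` S).
  apply: connected_continuous_connected => //; apply: continuous_subspaceT => s.
  by apply: cvgB; apply: cvgD; (try apply: cvgB); (exact: continuous_dotp || exact: cvg_cst).
have [s1 S1 e1] := hcoord_attained t; have [s2 S2 e2] := hcoord_attained (t + pi / 2).
have [s Ss fs0] : (f @` S) 0.
  apply: (fS (f s2) (f s1)); [by exists s2 | by exists s1 |].
  by rewrite /f e1 e2 !subr_le0 !subr_ge0 !hcoord_le1.
exists s => //; case/L_SP/hallwayP: (SL s Ss) => _ _.
by move: fs0; rewrite /f => /eqP; rewrite subr_eq0 => /eqP ->; case=> h; split.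
Qed.


End SupportFunction.

Section Monotonization.
Context {R : realType}.
Variables (omega : R) (S : set (pt R)).
Hypothesis omega_bounds : 0 < omega <= pi / 2.
Hypotheses (cS : compact S) (S0 : S !=set0) (Scon : connected S).
Hypotheses (supp_omega : supp S omega = 1) (supp_pihalf : supp S (pi / 2) = 1).
Hypothesis S_sub_L_S : forall t, 0 <= t <= omega -> S `<=` L_S S t.
Hypothesis S_sub_P : S `<=` P_ omega.
Implicit Types (t d l : R) (p q z : pt R).

Local Notation M := (monotonization S omega).

Definition above_floor z := [/\ 0 <= z.2, 0 <= dotp z (u_ omega) &
  forall t, 0 <= t <= omega -> 0 <= hcoord S t z \/ 0 <= hcoord S (t + pi / 2) z].

Definition below_roof z :=
  forall t, 0 <= t <= omega -> hcoord S t z <= 1 /\ hcoord S (t + pi / 2) z <= 1.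

Lemma omega_ge0 : 0 <= omega.
Proof. by case/andP: omega_bounds => /ltW. Qed.

Lemma sin_ge0_walls {t} : 0 <= t <= omega -> 0 <= sin t /\ 0 <= sin (t + pi / 2).
Proof.
move=> /andP[t0 t_le]; have pi_ge0 := pi_ge0 R; case/andP: omega_bounds => _ om_le.
rewrite sinDpihalf; split; [apply: sin_ge0_pi | apply: cos_ge0_pihalf];
  apply/andP; split; lra.
Qed.

Lemma hcoord_top z : hcoord S (0 + pi / 2) z = z.2.
Proof. by rewrite /hcoord add0r dotp_u_pihalf supp_pihalf subrK. Qed.

Lemma hcoord_omega z : hcoord S omega z = dotp z (u_ omega).
Proof. by rewrite /hcoord supp_omega subrK. Qed.

Lemma monotonizationP z : M z <-> above_floor z /\ below_roof z.
Proof.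
have zero_in : (0 : R) <= 0 <= omega by rewrite lexx omega_ge0.
have omega_in : 0 <= omega <= omega by rewrite lexx omega_ge0.
rewrite /monotonization; split.
  case=> /parallelogramP[/andP[z2 _] /andP[zw _]] zL.
  have {}zL t : 0 <= t <= omega -> L_S S t z by move=> ?; apply: zL; rewrite /= in_itv.
  by split; [split=> // t /zL/L_SP/hallwayP[] | move=> t /zL/L_SP/hallwayP[]].
case=> [[z2 zw zq] zr]; split.
  have [_ z2_le] := zr 0 zero_in; have [zw_le _] := zr omega omega_in.
  rewrite hcoord_top in z2_le; rewrite hcoord_omega in zw_le.
  by apply/parallelogramP; split; apply/andP.
move=> t; rewrite /= in_itv /= => t_in; apply/L_SP/hallwayP.
by have [? ?] := zr t t_in; split => //; exact: zq.
Qed.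

Lemma sofa_sub_monotonization : S `<=` M.
Proof.
move=> s Ss; split; first exact: S_sub_P.
by move=> t /= /[!in_itv] /= t_in; exact: S_sub_L_S.
Qed.

Lemma hcoord_vshift_walls z {t d} : 0 <= t <= omega -> 0 <= d ->
  hcoord S t z <= hcoord S t (vshift z d) <= hcoord S t z + d /\
  hcoord S (t + pi / 2) z <= hcoord S (t + pi / 2) (vshift z d) <=
    hcoord S (t + pi / 2) z + d.
Proof.
move=> /sin_ge0_walls[s1 s2] d0; rewrite !hcoord_vshift.
have := sin_le1 t; have := sin_le1 (t + pi / 2).
by split; apply/andP; split; nra.
Qed.

Lemma above_floor_vshift z d : 0 <= d -> above_floor z -> above_floor (vshift z d).
Proof.
move=> d0 [z2 zw zq]; have omega_in : 0 <= omega <= omega by rewrite lexx omega_ge0.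
split=> /=; first by rewrite addr_ge0.
  have [/andP[+ _] _] := hcoord_vshift_walls z omega_in d0.
  by rewrite !hcoord_omega; exact: le_trans.
move=> t t_in; have [/andP[h1 _] /andP[h2 _]] := hcoord_vshift_walls z t_in d0.
by case: (zq t t_in) => h; [left; exact: le_trans h1 | right; exact: le_trans h2].
Qed.

Lemma below_roof_vshift z d : 0 <= d -> below_roof (vshift z d) -> below_roof z.
Proof.
move=> d0 zr t t_in; have [/andP[h1 _] /andP[h2 _]] := hcoord_vshift_walls z t_in d0.
by have [? ?] := zr t t_in; split; exact: le_trans h1 _ || exact: le_trans h2 _.
Qed.

Lemma monotonization_vshift {z d d'} : M z -> M (vshift z d) -> 0 <= d' <= d ->
  M (vshift z d').
Proof.
move=> /monotonizationP[zf _] /monotonizationP[_ zr] /andP[d'0 d'd].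
apply/monotonizationP; split; first exact: above_floor_vshift.
apply: (below_roof_vshift _ (d - d')); first by rewrite subr_ge0.
by rewrite vshiftD addrC subrK.
Qed.

Lemma vertical_lineseg_sub {z d} : M z -> 0 <= d -> M (vshift z d) ->
  lineseg z (vshift z d) `<=` M.
Proof.
move=> Mz d0 Mzd _ [l /= /[!in_itv] /= /andP[l0 l1] <-]; rewrite seg_vshift.
by apply: (monotonization_vshift Mz Mzd); rewrite mulr_ge0 //= ler_piMl.
Qed.

Lemma below_roof_highest {p} : below_roof p ->
  exists2 d, 0 <= d & below_roof (vshift p d) /\
    forall e, 0 < e -> ~ below_roof (vshift p (d + e)).
Proof.
move=> pr; pose D : set R := [set d | 0 <= d /\ below_roof (vshift p d)].
have D0 : D 0 by split; rewrite // /vshift addr0 -surjective_pairing.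
have zero_in : (0 : R) <= 0 <= omega by rewrite lexx omega_ge0.
have Dub : has_ubound D.
  by exists (1 - p.2) => d [_ /(_ 0 zero_in)[_]]; rewrite hcoord_top /=; lra.
have sup_ge0 : 0 <= sup D by exact: ub_le_sup.
exists (sup D) => //; split; last first.
  move=> e e_gt0 /(conj (addr_ge0 sup_ge0 (ltW e_gt0)))/(ub_le_sup Dub); lra.
move=> t t_in; have [s1 s2] := sin_ge0_walls t_in.
rewrite !hcoord_vshift ![sup D * _]mulrC.
by split; apply: (affine_sup_le (ex_intro _ 0 D0) Dub) => // d [_ /(_ t t_in)];
  rewrite !hcoord_vshift ![d * _]mulrC => -[].
Qed.

Lemma below_roof_slack {z} : below_roof z ->
  (forall t, 0 <= t <= omega -> hcoord S t z != 1 /\ hcoord S (t + pi / 2) z != 1) ->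
  exists2 e, 0 < e & below_roof (vshift z e).
Proof.
move=> zr zfree.
have zlt t : 0 <= t <= omega -> hcoord S (t + 0) z < 1 /\ hcoord S (t + pi / 2) z < 1.
  move=> t_in; have [? ?] := zr t t_in; have [? ?] := zfree t t_in.
  by rewrite addr0 !lt_neqAle; split; apply/andP.
have gap a : (forall t, 0 <= t <= omega -> hcoord S (t + a) z < 1) ->
    exists2 e, 0 < e & forall t, 0 <= t <= omega -> hcoord S (t + a) z + e <= 1.
  move=> alt; have fcont : {within `[0, omega], continuous (fun t => 1 - hcoord S (t + a) z)}.
    apply: continuous_subspaceT => t; apply: cvgB; first exact: cvg_cst.
    exact: continuous_hcoord_shift.
  have fpos t : 0 <= t <= omega -> 0 < 1 - hcoord S (t + a) z by move/alt; rewrite subr_gt0.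
  have [e e_gt0 e_le] := continuous_pos_lbound omega_ge0 fcont fpos.
  by exists e => // t /e_le; rewrite lerBrDr addrC.
have [e1 e1_gt0 e1_le] := gap 0 (fun t t_in => (zlt t t_in).1).
have [e2 e2_gt0 e2_le] := gap (pi / 2) (fun t t_in => (zlt t t_in).2).
exists (Num.min e1 e2); first by rewrite lt_min e1_gt0.
have e_ge0 : 0 <= Num.min e1 e2 by rewrite le_min !ltW.
move=> t t_in; have [/andP[_ h1] /andP[_ h2]] := hcoord_vshift_walls z t_in e_ge0.
have := e1_le t t_in; have := e2_le t t_in; rewrite addr0.
have /andP[m1 m2] : (Num.min e1 e2 <= e1) && (Num.min e1 e2 <= e2).
  by rewrite !ge_min !lexx orbT.
by split; lra.
Qed.

Lemma monotonization_top {p} : M p ->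
  exists2 d, 0 <= d & M (vshift p d) /\ exists2 t0, 0 <= t0 <= omega &
    hcoord S t0 (vshift p d) = 1 \/ hcoord S (t0 + pi / 2) (vshift p d) = 1.
Proof.
case/monotonizationP => pf pr; have [d d0 [dr dmax]] := below_roof_highest pr.
exists d => //; split; first by apply/monotonizationP; split; first exact: above_floor_vshift.
apply: contrapT => untouched.
have [|e e_gt0] := below_roof_slack dr.
  move=> t t_in; split; apply/eqP => touch; apply: untouched; exists t => //.
  - by left.
  - by right.
by rewrite vshiftD; exact: dmax.
Qed.

Lemma monotonization_seg z q l : M z -> M q -> 0 <= l <= 1 ->
  (forall t, 0 <= t <= omega ->
     0 <= hcoord S t (seg z q l) \/ 0 <= hcoord S (t + pi / 2) (seg z q l)) ->
  M (seg z q l).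
Proof.
move=> /monotonizationP[[z2 zw _] zr] /monotonizationP[[q2 qw _] qr] l01 corner.
apply/monotonizationP; split; first split=> //.
- exact: conv_ge.
- by rewrite dotp_seg; exact: conv_ge.
move=> t t_in; rewrite !hcoord_seg.
by have [? ?] := zr t t_in; have [? ?] := qr t t_in; split; exact: conv_le.
Qed.

Lemma wall_lineseg_sub {a z s} :
  (forall t, 0 <= t <= omega -> 0 <= cos (a - t) \/ 0 <= sin (a - t)) ->
  M z -> S s -> hcoord S a z = 1 -> hcoord S a s = 1 -> lineseg z s `<=` M.
Proof.
move=> a_ok Mz Ss za sa _ [l /= /[!in_itv] /= l01 <-].
have Ms : M s by exact: sofa_sub_monotonization.
apply: monotonization_seg => // t t_in; rewrite !hcoord_seg.
(* [(c, b)] is the wall normal [u_ a] in the frame of [L_S S t]. *)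
set c := cos (a - t); set b := sin (a - t).
have cb1 : c ^+ 2 + b ^+ 2 = 1 by rewrite cos2Dsin2.
have frame q q' : hcoord S a q' - hcoord S a q =
    c * (hcoord S t q' - hcoord S t q) +
    b * (hcoord S (t + pi / 2) q' - hcoord S (t + pi / 2) q).
  by rewrite /hcoord !(dotp_u_frame a t) -/c -/b; ring.
have [[c_ge0 b_ge0] | c_or_b_lt0] : (0 <= c /\ 0 <= b) \/ (c < 0 \/ b < 0).
  case: (lerP 0 c) => ?; case: (lerP 0 b) => ?; by [left | right; left | right; right].
- have [k Sk [k1 k2]] := corner_point_of_connected _ cS S0 t Scon (S_sub_L_S _ t_in).
  have := frame k (seg z s l); rewrite hcoord_seg za sa subrr mulr0 addr0 !hcoord_seg.
  have := hcoord_le1 _ cS S0 a _ Sk.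
  move=> kle; rewrite !mulrBr => e; apply: (nonneg_comb c_ge0 b_ge0 cb1).
  by have := mulr_ge0 c_ge0 k1; have := mulr_ge0 b_ge0 k2; lra.
- have cb_le0 : c * b <= 0.
    by have := a_ok t t_in; rewrite -/c -/b; case: c_or_b_lt0 => ? [] ?; nra.
  have := frame z s; rewrite za sa subrr => /esym /comb0_mul_ge0 /(_ cb_le0 cb1) dxy.
  have /monotonizationP[[_ _ zc] _] := Mz; have /monotonizationP[[_ _ sc] _] := Ms.
  exact: quadrant_segment l01 (zc t t_in) (sc t t_in) dxy.
Qed.

Lemma monotonization_linked p : M p ->
  exists K, [/\ connected K, K `<=` M, K p & K `&` S !=set0].
Proof.
move=> Mp; have [d d0 [Me [t0 /andP[t0_ge0 t0_le] touch]]] := monotonization_top Mp.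
set e := vshift p d in Me touch.
have cos_ge0 t : 0 <= t <= omega -> 0 <= cos (t0 - t).
  move=> /andP[t_ge0 t_le]; have pi_ge0 := pi_ge0 R; case/andP: omega_bounds => _ om_le.
  by apply: cos_ge0_pihalf; apply/andP; split; lra.
have [a a_ok ea] : exists2 a, (forall t, 0 <= t <= omega ->
    0 <= cos (a - t) \/ 0 <= sin (a - t)) & hcoord S a e = 1.
  case: touch => touch; [exists t0 | exists (t0 + pi / 2)] => // t /cos_ge0; first by left.
  by right; rewrite addrAC sinDpihalf.
have [s Ss sa] := hcoord_attained _ cS S0 a.
exists (lineseg p e `|` lineseg e s); split.
- by apply: connectedU; [exists e; split; [exact: lineseg_end | exact: lineseg_start] |
    exact: lineseg_connected | exact: lineseg_connected].
- move=> x [|]; first exact: vertical_lineseg_sub Mp d0 Me x.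
  exact: wall_lineseg_sub a_ok Me Ss ea sa x.
- by left; exact: lineseg_start.
- by exists s; split=> //; right; exact: lineseg_end.
Qed.

End Monotonization.

Lemma moving_sofa_sub_L_S {R : realType} {S : set (pt R)} {omega t : R} :
  moving_sofa S omega -> 0 <= t <= omega -> S `<=` L_S S t.
Proof.
case=> _ S0 cS [theta [x [theta_cont _ [theta0 theta1] _ inside]]] /andP[t_ge0 t_le].
have [r /[!in_itv] /= r_in theta_r] : exists2 r, r \in `[0, 1] & theta r = - t.
  apply: IVT => //; rewrite theta0 theta1 ge_min le_max lerN2 oppr_le0 t_le t_ge0.
  by rewrite orbT.
apply: (sub_L_S_of_hallway_translate _ cS S0 t (x r)) => s Ss.
by have := inside r r_in _ (ex_intro2 _ _ s Ss erefl); rewrite theta_r rotN.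
Qed.

Lemma moving_sofa_sub_P {R : realType} {S : set (pt R)} {omega : R} :
  moving_sofa S omega -> standard_position S omega -> S `<=` P_ omega.
Proof.
case=> _ S0 cS [theta [x [_ _ [theta0 theta1] [start finish] _]]] [supp_omega supp_pihalf].
move=> s Ss; apply/parallelogramP; split.
  rewrite -dotp_u_pihalf; apply: (slab_of_translated_slab _ cS S0 _ (x 0).2) => // q Sq.
  have := start _ (ex_intro2 _ _ q Sq erefl).
  by rewrite theta0 rot0 dotp_u_pihalf => -[].
apply: (slab_of_translated_slab _ cS S0 _ (x 1).1) => // q Sq.
have := finish _ (ex_intro2 _ _ q Sq erefl).
by rewrite theta1 rotN => -[].
Qed.

Theorem theorem3p7 (R : realType) (omega : R) (S : set (pt R)) :
  0 < omega <= pi / 2 ->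
  moving_sofa S omega ->
  standard_position S omega ->
  connected (monotonization S omega).
Proof.
move=> omega_bounds sofa std.
have [Scon S0 cS _] := sofa; have [supp_omega supp_pihalf] := std.
have S_sub_L_S t : 0 <= t <= omega -> S `<=` L_S S t := moving_sofa_sub_L_S sofa.
have S_sub_P := moving_sofa_sub_P sofa std.
apply: (connected_linked Scon S0).
  exact: sofa_sub_monotonization S_sub_L_S S_sub_P.
by move=> p; apply: monotonization_linked.
Qed.
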